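(* Let $q\in\mathbb{R}[x]$ be a positive definite polynomial of degree two. (a) For every psd polynomial $f\in\mathbb{R}[x]$ there exist $\xi,\eta\in\mathbb{R}[x]$ with $f=\eta^2+q\xi^2$. (b) If $f\neq0$ in (a) has $\deg(f)=2d$, then the number of pairs $(\xi,\eta)\in\mathbb{R}[x]^2$ with $f=\eta^2+q\xi^2$ is at most $2^{d+1}$, with equality if and only if $q\nmid f$ and $f$ is square-free.
   Context: A real polynomial is psd (positive semidefinite) if it takes only nonnegative values on $\mathbb{R}$, and positive definite if it takes only positive values on $\mathbb{R}$. *)

From mathcomp Require Import all_boot all_order all_algebra.
From mathcomp Require Import reals.
Set Implicit Arguments. Unset Strict Implicit. Unset Printing Implicit Defensive.
Import Order.TTheory GRing.Theory Num.Theory.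
Local Open Scope ring_scope.

Definition psd_poly (R : realType) (f : {poly R}) : Prop :=
  forall x : R, 0 <= f.[x].

Definition pd_poly (R : realType) (f : {poly R}) : Prop :=
  forall x : R, 0 < f.[x].

Definition squarefree_poly (R : realType) (f : {poly R}) : Prop :=
  forall g : {poly R}, (1 < size g)%N -> ~ (g ^+ 2 %| f).

From mathcomp Require Import all_boot all_order all_algebra.
From mathcomp Require Import reals ring lra zify.
From mathcomp.real_closed Require Import complex polyrcf.
Import Order.TTheory GRing.Theory Num.Theory.
Set Implicit Arguments. Unset Strict Implicit. Unset Printing Implicit Defensive.
Local Open Scope ring_scope.

(* Over the reals a psd polynomial is a product of squares (X - r)^2, copies of q and positive
   definite quadratics p not associate to q. Each such p is itself a norm A^2 + q B^2 (a suitable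
   member p - t q of the pencil through p and q is a perfect square), so (a) follows from the
   multiplicativity of the norm. For (b), the representations of p g are the products of those of g
   with A + B sqrt(-q) or with its conjugate; the two families are disjoint exactly when p does not
   divide g, while the factors (X - r)^2 and q contribute no new choices. *)

Section PsdPolynomials.
Variable R : realType.
Implicit Types (f g h p : {poly R}) (r : R).

Lemma lead_coef_psd_gt0 p : psd_poly p -> p != 0 -> 0 < lead_coef p.
Proof.
move=> p_psd p_neq0; rewrite lt_def lead_coef_eq0 p_neq0 /= leNgt.
apply/negP => lc_lt0; have /poly_pinfty_gt_lc [x xP] : 0 < lead_coef (- p).
  by rewrite lead_coefN oppr_gt0.
by have := xP x (lexx x); rewrite lead_coefN hornerN lerN2; have := p_psd x; lra.
Qed.

Lemma psd_mulKl p g : pd_poly p -> psd_poly (p * g) -> psd_poly g.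
Proof. by move=> p_pd pg_psd x; have := pg_psd x; rewrite hornerM pmulr_rge0. Qed.

Lemma horner_lt0_near h r : h.[r] < 0 ->
  exists2 d : R, 0 < d & forall y, `|y - r| < d -> h.[y] < 0.
Proof.
rewrite -oppr_gt0 => hr_gt0; have [d d_gt0 dP] := poly_cont r h hr_gt0.
by exists d => // y /dP; rewrite ltr_norml; lra.
Qed.

Lemma psd_poly_punctured h r : (forall y, y != r -> 0 <= h.[y]) -> psd_poly h.
Proof.
move=> hP x; have [->|/hP//] := eqVneq x r; rewrite leNgt; apply/negP.
move=> /horner_lt0_near [d d_gt0 dP]; have := dP (r + d / 2).
have yE : r + d / 2 - r = d / 2 by ring.
rewrite yE ger0_norm; last lra.
have := hP (r + d / 2); rewrite -subr_eq0 yE; lra.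
Qed.

(* The factor [X - r] changes sign at [r], so a psd multiple of it forces [g] to vanish there. *)
Lemma psd_XsubC_mul_root g r : psd_poly (('X - r%:P) * g) -> root g r.
Proof.
move=> Xg_psd; have prod_ge0 y : 0 <= (y - r) * g.[y].
  by have := Xg_psd y; rewrite hornerM hornerXsubC.
rewrite /root; have [gr_lt0|gr_gt0|//] := ltgtP g.[r] 0.
- have [d d_gt0 dP] := horner_lt0_near gr_lt0.
  have yE : r + d / 2 - r = d / 2 by ring.
  have := prod_ge0 (r + d / 2); rewrite yE pmulr_rge0; last lra.
  by have := dP (r + d / 2); rewrite yE ger0_norm; lra.
- have [d d_gt0 dP] := @horner_lt0_near (- g) r ltac:(by rewrite hornerN oppr_lt0).
  have yE : r - d / 2 - r = - (d / 2) by ring.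
  have := prod_ge0 (r - d / 2); rewrite yE nmulr_rge0; last lra.
  have := dP (r - d / 2); rewrite yE normrN ger0_norm; last lra.
  by rewrite hornerN oppr_lt0; lra.
Qed.

Lemma psd_root_factor f r : psd_poly f -> root f r ->
  exists2 g, f = ('X - r%:P) ^+ 2 * g & psd_poly g.
Proof.
move=> f_psd /factor_theorem [g1 fE]; rewrite mulrC in fE.
have /factor_theorem [g g1E] : root g1 r by apply: psd_XsubC_mul_root; rewrite -fE.
exists g; first by rewrite fE g1E; ring.
apply: (@psd_poly_punctured _ r) => y y_neq_r.
have fyE : f.[y] = (y - r) ^+ 2 * g.[y] by rewrite fE g1E !hornerM hornerXsubC; ring.
by have := f_psd y; rewrite fyE pmulr_rge0 // exprn_even_gt0 //= subr_eq0.
Qed.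

Lemma size_polyD_lead_ge0 p g : 0 <= lead_coef p -> 0 <= lead_coef g ->
  (size p <= size (p + g)%R)%N /\ (size g <= size (p + g)%R)%N.
Proof.
move=> p_ge0 g_ge0; have [lt_pg|lt_gp|eq_pg] := ltngtP (size p) (size g).
- by rewrite addrC size_polyDl // (ltnW lt_pg).
- by rewrite size_polyDl // (ltnW lt_gp).
rewrite eq_pg; suff le_gpg : (size g <= size (p + g)%R)%N by split.
have [->|g_neq0] := eqVneq g 0; first by rewrite size_poly0.
have lc_gt0 : 0 < lead_coef g by rewrite lt_def lead_coef_eq0 g_neq0.
rewrite (polySpred g_neq0) ltnNge; apply/negP => /leq_sizeP/(_ _ (leqnn _))/eqP.
by rewrite coefD -{1}eq_pg -!lead_coefE gt_eqF // ltr_wpDl.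
Qed.

End PsdPolynomials.

Section IrreducibleFactors.
Variable F : fieldType.
Implicit Types p a b : {poly F}.

Lemma irredp_coprime p a : irreducible_poly p -> ~~ (p %| a) -> coprimep p a.
Proof.
move=> p_irr p_ndvd_a; have [|gcd_eqp] := irredp_XsubCP p_irr (dvdp_gcdl p a).
  by rewrite -gcdp_eqp1.
by move: p_ndvd_a; rewrite -(eqp_dvdl _ gcd_eqp) dvdp_gcdr.
Qed.

Lemma irredp_coprime_size p a : irreducible_poly p -> a != 0 ->
  (size a < size p)%N -> coprimep p a.
Proof.
move=> p_irr a_neq0 lt_ap; apply: irredp_coprime => //.
by apply/negP => /(dvdp_leq a_neq0); rewrite leqNgt lt_ap.
Qed.

Lemma irredp_dvdp_mul p a b : irreducible_poly p ->
  p %| a * b -> (p %| a) || (p %| b).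
Proof.
move=> p_irr p_dvd_ab; have [//|/(irredp_coprime p_irr) p_cop_a] := boolP (p %| a).
by rewrite -(Gauss_dvdpr _ p_cop_a).
Qed.

Lemma irredp_dvdp_sqr p a : irreducible_poly p -> p %| a ^+ 2 -> p %| a.
Proof. by move=> p_irr; rewrite expr2 => /(irredp_dvdp_mul p_irr)/orP[]. Qed.

End IrreducibleFactors.

Section Quadratics.
Variable R : realType.
Implicit Types (p q r A : {poly R}) (t : R).

Lemma size3_polyE p : (size p <= 3)%N ->
  p = (p`_2)%:P * 'X ^+ 2 + (p`_1)%:P * 'X + (p`_0)%:P.
Proof.
move=> p_small; apply/polyP => i; rewrite !coefE.
case: i => [|[|[|i]]] /=; rewrite ?mulr0 ?mulr1 ?addr0 ?add0r //.
by move/leq_sizeP: p_small => ->.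
Qed.

Lemma horner_size3 p x : (size p <= 3)%N -> p.[x] = p`_2 * x ^+ 2 + p`_1 * x + p`_0.
Proof.
move=> p_small; rewrite {1}(size3_polyE p_small).
by rewrite !(hornerD, hornerM, hornerC, hornerX, horner_exp).
Qed.

Definition disc p := p`_1 ^+ 2 - 4%:R * p`_2 * p`_0.

Lemma pd_quadratic_lead_gt0 p : pd_poly p -> size p = 3%N -> 0 < p`_2.
Proof.
move=> p_pd p_size; have := @lead_coef_psd_gt0 _ p (fun x => ltW (p_pd x)).
by rewrite lead_coefE p_size -size_poly_eq0 p_size; apply.
Qed.

Lemma pd_disc_lt0 p : pd_poly p -> size p = 3%N -> disc p < 0.
Proof.
move=> p_pd p_size; have p2_gt0 := pd_quadratic_lead_gt0 p_pd p_size.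
pose x0 := - p`_1 / (2%:R * p`_2).
have vertexE : 4%:R * p`_2 * p.[x0] = - disc p.
  by rewrite horner_size3 ?p_size // /x0 /disc; field; rewrite gt_eqF.
have : 0 < 4%:R * p`_2 * p.[x0] by rewrite !mulr_gt0.
by rewrite vertexE; lra.
Qed.

Lemma pd_quadratic_irreducible p : pd_poly p -> size p = 3%N -> irreducible_poly p.
Proof.
move=> p_pd p_size; apply: cubic_irreducible; first by rewrite p_size.
by move=> x; rewrite /root gt_eqF.
Qed.

Lemma sqr_of_disc_eq0 p : (size p <= 3)%N -> 0 < p`_2 -> disc p = 0 ->
  exists2 A, p = A ^+ 2 & A != 0.
Proof.
move=> p_small p2_gt0 /eqP; rewrite subr_eq0 => /eqP disc0.
set s := Num.sqrt p`_2; set c := p`_1 / (2%:R * s).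
have s_gt0 : 0 < s by rewrite sqrtr_gt0.
have p2E : p`_2 = s ^+ 2 by rewrite sqr_sqrtr // ltW.
have p1E : p`_1 = 2%:R * s * c by rewrite /c; field; rewrite gt_eqF.
have p0E : p`_0 = c ^+ 2.
  apply: (mulfI (_ : 4%:R * p`_2 != 0)); first by rewrite gt_eqF ?mulr_gt0.
  by rewrite -disc0 p1E p2E; ring.
exists (s%:P * 'X + c%:P).
  rewrite {1}(size3_polyE p_small) p2E p1E p0E.
  by rewrite !(rmorphD, rmorphM, rmorphXn) /=; ring.
apply/eqP => /(congr1 (fun A : {poly R} => A`_1)); rewrite !coefE /= mulr1 addr0.
by apply/eqP; rewrite gt_eqF.
Qed.

Lemma qnorm_of_subZ_sqr p q t A : 0 < t -> p - t *: q = A ^+ 2 ->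
  p = A ^+ 2 + q * (Num.sqrt t)%:P ^+ 2.
Proof.
move=> t_gt0 <-; rewrite -polyC_exp sqr_sqrtr ?ltW // mulrC mul_polyC; ring.
Qed.

Lemma size_subZ_le3 p q t : (size p <= 3)%N -> (size q <= 3)%N ->
  (size (p - t *: q)%R <= 3)%N.
Proof.
move=> p_small q_small; rewrite (leq_trans (size_polyD _ _)) // geq_max p_small.
by rewrite size_polyN (leq_trans (size_scale_leq _ _)).
Qed.

Lemma qnorm_of_disc_root p q t : (size p <= 3)%N -> (size q <= 3)%N ->
  0 < t -> t * q`_2 < p`_2 -> disc (p - t *: q) = 0 ->
  exists A B, [/\ p = A ^+ 2 + q * B ^+ 2, A != 0 & B != 0].
Proof.
move=> p_small q_small t_gt0 lt_tq_p disc0.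
have [|A rE A_neq0] := sqr_of_disc_eq0 (size_subZ_le3 t p_small q_small) _ disc0.
  by rewrite coefB coefZ subr_gt0.
exists A, (Num.sqrt t)%:P; split=> //; first exact: qnorm_of_subZ_sqr.
by rewrite polyC_eq0 gt_eqF // sqrtr_gt0.
Qed.

(* At [t = 0] the discriminant of [p - t q] is negative, while at [t = p_2 / q_2] the pencil has
   degree at most one; in between the discriminant vanishes unless that linear member is a
   constant [c >= 0]. *)
Lemma pencil_disc_root q p t1 : pd_poly q -> size q = 3%N -> pd_poly p -> size p = 3%N ->
  t1 * q`_2 = p`_2 -> (p - t1 *: q)`_1 != 0 \/ (p - t1 *: q)`_0 < 0 ->
  exists2 t, 0 < t < t1 & disc (p - t *: q) = 0.
Proof.
move=> q_pd q_size p_pd p_size t1E; set r := p - t1 *: q => r_neg.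
have q2_gt0 := pd_quadratic_lead_gt0 q_pd q_size.
have t1_gt0 : 0 < t1 by rewrite -(pmulr_lgt0 _ q2_gt0) t1E pd_quadratic_lead_gt0.
have rE i : p`_i = t1 * q`_i + r`_i by rewrite coefB coefZ addrC subrK.
have r2_eq0 : r`_2 = 0 by rewrite coefB coefZ t1E subrr.
pose D := ((p`_1)%:P - q`_1 *: 'X) ^+ 2 -
  (4%:R)%:P * ((p`_2)%:P - q`_2 *: 'X) * ((p`_0)%:P - q`_0 *: 'X).
have DE t : D.[t] = disc (p - t *: q).
  rewrite /disc !coefB !coefZ.
  by rewrite !(hornerD, hornerN, hornerM, hornerZ, hornerX, hornerC, horner_exp); ring.
have D0_lt0 : D.[0] < 0 by rewrite DE scale0r subr0 pd_disc_lt0.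
have [r1_eq0|r1_neq0] := eqVneq r`_1 0; last first.
  have Dt1_gt0 : 0 < D.[t1].
    by rewrite DE -/r /disc r2_eq0 mulr0 mul0r subr0 lt_def sqr_ge0 sqrf_eq0 r1_neq0.
  have sign_change : D.[0] * D.[t1] < 0 by rewrite pmulr_llt0.
  have [t] := poly_ivtoo (ltW t1_gt0) sign_change.
  by rewrite in_itv /= => t_in /eqP Dt0; exists t; rewrite // -DE.
have r0_lt0 : r`_0 < 0 by case: r_neg => //; rewrite r1_eq0 eqxx.
pose L := (t1%:P - 'X) * (disc q)%:P - (4%:R * q`_2 * r`_0)%:P.
have DL t : D.[t] = (t1 - t) * L.[t].
  rewrite DE /disc !coefB !coefZ !rE r2_eq0 r1_eq0.
  by rewrite !(hornerD, hornerN, hornerM, hornerX, hornerC) /disc; ring.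
have L0_lt0 : L.[0] < 0 by move: D0_lt0; rewrite DL subr0 pmulr_rlt0.
have Lt1_gt0 : 0 < L.[t1].
  rewrite !(hornerD, hornerN, hornerM, hornerX, hornerC) subrr mul0r sub0r.
  by rewrite oppr_gt0 pmulr_rlt0 // mulr_gt0.
have sign_change : L.[0] * L.[t1] < 0 by rewrite pmulr_llt0.
have [t] := poly_ivtoo (ltW t1_gt0) sign_change.
by rewrite in_itv /= => t_in /eqP Lt0; exists t; rewrite // -DE DL Lt0 mulr0.
Qed.

Lemma pd_quadratic_qnorm q p : pd_poly q -> size q = 3%N ->
  pd_poly p -> size p = 3%N ->
  q %| p \/ exists A B, [/\ p = A ^+ 2 + q * B ^+ 2, A != 0 & B != 0].
Proof.
move=> q_pd q_size p_pd p_size.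
have q2_gt0 := pd_quadratic_lead_gt0 q_pd q_size.
have p_small : (size p <= 3)%N by rewrite p_size.
have q_small : (size q <= 3)%N by rewrite q_size.
set t1 := p`_2 / q`_2; have t1_gt0 : 0 < t1 by rewrite divr_gt0 ?pd_quadratic_lead_gt0.
set r := p - t1 *: q.
have t1E : t1 * q`_2 = p`_2 by rewrite divfK ?gt_eqF.
have [r_nconst|r_const] := boolP ((r`_1 != 0) || (r`_0 < 0)).
  have [t /andP[t_gt0 lt_t_t1] disc0] :=
    pencil_disc_root q_pd q_size p_pd p_size t1E (orP r_nconst).
  by right; apply: (@qnorm_of_disc_root _ _ t) => //; rewrite -t1E ltr_pM2r.
move: r_const; rewrite negb_or negbK -leNgt => /andP[/eqP r1_eq0 r0_ge0].
have r_small : (size r <= 3)%N := size_subZ_le3 t1 p_small q_small.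
have rC : r = (r`_0)%:P.
  rewrite {1}(size3_polyE r_small) r1_eq0.
  by rewrite coefB coefZ t1E subrr !mul0r !add0r.
have [r0_eq0|r0_neq0] := eqVneq r`_0 0.
  left; apply/dvdpP; exists t1%:P.
  by move/eqP: rC; rewrite r0_eq0 subr_eq0 mul_polyC => /eqP.
right; exists (Num.sqrt r`_0)%:P, (Num.sqrt t1)%:P; split.
- by apply: qnorm_of_subZ_sqr => //; rewrite -polyC_exp sqr_sqrtr // -rC.
- by rewrite polyC_eq0 sqrtr_eq0 -ltNge lt_def r0_neq0.
- by rewrite polyC_eq0 gt_eqF // sqrtr_gt0.
Qed.

End Quadratics.

Section ComplexFactor.
Variable R : realType.
Local Open Scope complex_scope.

(* A complex root [a + ib] of [f] gives either the real root [a] (when [b = 0]) or, together with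
   its conjugate, the real quadratic factor [(X - a)^2 + b^2]. *)
Lemma real_root_or_quadratic_factor (f : {poly R}) : (1 < size f)%N ->
  (exists r, root f r) \/
  exists a b : R, b != 0 /\ ('X - a%:P) ^+ 2 + (b ^+ 2)%:P %| f.
Proof.
move=> f_nconst; pose fC := map_poly (real_complex R) f.
have [z fC_z] : exists z, root fC z.
  by apply/closed_rootP; rewrite size_map_poly; case: (size f) f_nconst => [|[|n]].
case: z fC_z => a b fC_z; have [b0|b_neq0] := eqVneq b 0.
  by left; exists a; rewrite -(fmorph_root (real_complex R)); move: fC_z; rewrite b0.
right; exists a, b; split=> //.
set z := (a +i* b)%C.
have zE : z = a%:C + 'i%C * b%:C by rewrite /z /=; simpc.
pose zc := z^*%C.
have zcE : zc = a%:C - 'i%C * b%:C by rewrite /zc /z /=; simpc.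
have fC_zc : root fC zc.
  have : map_poly conjc fC = fC.
    rewrite /fC -map_poly_comp; apply: eq_map_poly => x /=; exact: conjc_real.
  by move=> e; rewrite /zc -complex_root_conj e.
have cop : coprimep ('X - z%:P) ('X - zc%:P).
  apply: coprimep_XsubC2; rewrite zcE zE.
  have -> : a%:C - 'i%C * b%:C - (a%:C + 'i%C * b%:C) = - (2%:R * 'i%C * b%:C) :> R[i] by ring.
  rewrite oppr_eq0 !mulf_neq0 //; last by rewrite (inj_eq (@complexI R)).
  - by rewrite pnatr_eq0.
  - by apply/eqP => /(congr1 (@complex.Im R)) /= /eqP; rewrite oner_eq0.
rewrite -(dvdp_map (real_complex R)).
have -> : map_poly (real_complex R) (('X - a%:P) ^+ 2 + (b ^+ 2)%:P) =
  ('X - z%:P) * ('X - zc%:P).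
  rewrite rmorphD rmorphXn rmorphB /= map_polyX !map_polyC /= rmorphXn /=.
  rewrite zcE zE !(polyCD, polyCB, polyCN, polyCM).
  have ip : ('i%C : R[i])%:P * ('i%C)%:P = -1.
    by rewrite -polyCM -expr2 sqr_i polyCN polyC1.
  have -> : (b%:C)%:P * (b%:C)%:P = - (('i%C : R[i])%:P * ('i%C)%:P) * ((b%:C)%:P * (b%:C)%:P).
    by rewrite ip opprK mul1r.
  ring.
by rewrite Gauss_dvdp // -!root_factor_theorem; apply/andP; split.
Qed.

End ComplexFactor.

Section SquareFree.
Variable R : realType.
Implicit Types (p g h : {poly R}).

Lemma leq_size_sqr g n : (size (g ^+ 2)%R <= n.*2.+1)%N -> (size g <= n.+1)%N.
Proof.
have [->|g_neq0] := eqVneq g 0; first by rewrite size_poly0.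
have := size_exp g 2; have : (0 < size (g ^+ 2))%N by rewrite size_poly_gt0 expf_neq0.
have : (0 < size g)%N by rewrite size_poly_gt0.
by move: (size g) (size (g ^+ 2)) => a b; lia.
Qed.

Lemma not_squarefree_sqr_mul g h : (1 < size g)%N -> ~ squarefree_poly (g ^+ 2 * h).
Proof. by move=> g_nconst /(_ g g_nconst); rewrite dvdp_mulIl. Qed.

Lemma squarefree_mul_irr p g : irreducible_poly p ->
  squarefree_poly (p * g) <-> squarefree_poly g /\ ~~ (p %| g).
Proof.
move=> p_irr; have p_neq0 := irredp_neq0 p_irr; split.
  move=> pg_sqf; split; first by move=> h h_nconst hg; apply: (pg_sqf h) => //; rewrite dvdp_mull.
  apply/negP => /dvdpP [k gE]; apply: (pg_sqf p p_irr.1).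
  by rewrite gE mulrCA expr2 dvdp_mull // dvdpp.
case=> g_sqf p_ndvd_g h h_nconst h2_dvd_pg.
have [/dvdpP [m hE]|p_ndvd_h] := boolP (p %| h).
  move: h2_dvd_pg; rewrite hE (_ : (m * p) ^+ 2 = p * (m ^+ 2 * p)); last by ring.
  by rewrite dvdp_mul2l // => /(dvdp_trans (dvdp_mull _ (dvdpp p))); apply/negP.
apply: (g_sqf h h_nconst); rewrite -(@Gauss_dvdpr _ _ p) // coprimep_sym.
by apply: coprimep_expr; exact: irredp_coprime.
Qed.

End SquareFree.

Section QNorm.
Variables (R : realType) (q : {poly R}).
Hypotheses (q_pd : pd_poly q) (q_size : size q = 3%N).
Implicit Types (f g h p A B : {poly R}) (u v w x : {poly R} * {poly R}).

(* A pair [(xi, eta)] stands for [eta + xi sqrt(-q)]; [qnorm] is its norm and [qmul A B] is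
   multiplication by [A + B sqrt(-q)]. *)
Definition qnorm u := u.2 ^+ 2 + q * u.1 ^+ 2.

Definition qmul A B u := (u.1 * A + u.2 * B, u.2 * A - q * u.1 * B).

Lemma qnormM A B u : qnorm (qmul A B u) = qnorm u * (A ^+ 2 + q * B ^+ 2).
Proof. by rewrite /qnorm /qmul /=; ring. Qed.

Let q_neq0 : q != 0. Proof. by rewrite -size_poly_eq0 q_size. Qed.

Let q_lead_gt0 : 0 < lead_coef q.
Proof. by apply: lead_coef_psd_gt0 q_neq0 => x; apply: ltW. Qed.

Let q_irr : irreducible_poly q. Proof. exact: pd_quadratic_irreducible. Qed.

Lemma size_qnorm u :
  (size (u.2 ^+ 2)%R <= size (qnorm u))%N /\ (size (q * u.1 ^+ 2)%R <= size (qnorm u))%N.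
Proof.
apply: size_polyD_lead_ge0; first by rewrite lead_coef_exp sqr_ge0.
by rewrite lead_coefM lead_coef_exp mulr_ge0 ?sqr_ge0 ?(ltW q_lead_gt0).
Qed.

Lemma size_qnorm_quadratic u : size (qnorm u) = 3%N -> (size u.2 <= 2)%N /\ (size u.1 <= 1)%N.
Proof.
move=> u_size; have [u2_small qu1_small] := size_qnorm u; rewrite u_size in u2_small qu1_small.
split; first exact: (@leq_size_sqr _ _ 1).
have [->|u1_neq0] := eqVneq u.1 0; first by rewrite size_poly0.
apply: (@leq_size_sqr _ _ 0); move: qu1_small.
by rewrite size_mul ?expf_neq0 // q_size !addSn.
Qed.

Lemma qnorm_eq0 u : (qnorm u == 0) = (u == (0, 0)).
Proof.
case: u => u1 u2; rewrite xpair_eqE; apply/idP/andP => [/eqP u0|[/eqP-> /eqP->]].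
  have [] := size_qnorm (u1, u2); rewrite u0 size_poly0 !leqn0 !size_poly_eq0 /=.
  by rewrite sqrf_eq0 mulf_eq0 (negPf q_neq0) sqrf_eq0 /= => -> ->.
by rewrite /qnorm expr2 !mul0r mulr0 addr0.
Qed.

Lemma qmul_inj A B : A ^+ 2 + q * B ^+ 2 != 0 -> injective (qmul A B).
Proof.
move=> p_neq0 [u1 u2] [v1 v2] [e1 e2].
have : qnorm (u1 - v1, u2 - v2) * (A ^+ 2 + q * B ^+ 2) == 0.
  have -> : qnorm (u1 - v1, u2 - v2) * (A ^+ 2 + q * B ^+ 2) =
      ((u2 * A - q * u1 * B) - (v2 * A - q * v1 * B)) ^+ 2 +
      q * ((u1 * A + u2 * B) - (v1 * A + v2 * B)) ^+ 2 by rewrite /qnorm /=; ring.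
  by rewrite e1 e2 !subrr expr2 !mul0r mulr0 addr0.
rewrite mulf_eq0 (negPf p_neq0) orbF qnorm_eq0 xpair_eqE !subr_eq0.
by case/andP => /eqP-> /eqP->.
Qed.

Lemma qnorm_root u r : root (qnorm u) r -> root u.1 r /\ root u.2 r.
Proof.
rewrite /root /qnorm !(hornerD, hornerM, horner_exp) => /eqP u_r.
have q_r := q_pd r; have := sqr_ge0 u.2.[r]; have := sqr_ge0 u.1.[r].
have: q.[r] * u.1.[r] ^+ 2 = 0 /\ u.2.[r] ^+ 2 = 0 by nra.
by case=> /eqP; rewrite mulf_eq0 gt_eqF //= !sqrf_eq0 => -> /eqP; rewrite sqrf_eq0.
Qed.

Lemma size_mul_quadratic p g : size p = 3%N -> p * g != 0 -> size (p * g) = (size g).+2.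
Proof.
move=> p_size pg_neq0; have [p_neq0 g_neq0] : p != 0 /\ g != 0.
  by apply/andP; rewrite -negb_or -mulf_eq0.
by rewrite size_mul // p_size.
Qed.

Variant psd_factor_spec f : Prop :=
| PsdFactorSqr r g of f = ('X - r%:P) ^+ 2 * g & psd_poly g
| PsdFactorQ g of f = q * g & psd_poly g
| PsdFactorQnorm p A B g of f = p * g & psd_poly g & ~~ (q %| f) & size p = 3%N &
    pd_poly p & p = A ^+ 2 + q * B ^+ 2 & coprimep p A & coprimep p B & coprimep p q.

Lemma psd_factorP f : psd_poly f -> (1 < size f)%N -> psd_factor_spec f.
Proof.
move=> f_psd f_nconst.
have [[r f_r]|[a [b [b_neq0 p_dvd_f]]]] := real_root_or_quadratic_factor f_nconst.
  by have [g] := psd_root_factor f_psd f_r; exact: PsdFactorSqr.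
have [q_dvd_f|q_ndvd_f] := boolP (q %| f).
  have fE : f = q * (f %/ q) by rewrite mulrC divpK.
  by apply: (PsdFactorQ fE); apply: (psd_mulKl q_pd); rewrite -fE.
move: p_dvd_f; set p := _ + _ => p_dvd_f.
have p_pd : pd_poly p.
  move=> x; rewrite /p !(hornerD, horner_exp, hornerXsubC, hornerC).
  by rewrite ltr_pwDr ?sqr_ge0 // lt_def sqr_ge0 sqrf_eq0 b_neq0.
have p_size : size p = 3%N.
  by rewrite /p size_polyDl size_exp_XsubC // size_polyC; case: (_ != 0).
have p_irr := pd_quadratic_irreducible p_pd p_size.
have [q_dvd_p|[A [B [pE A_neq0 B_neq0]]]] := pd_quadratic_qnorm q_pd q_size p_pd p_size.
  by move: q_ndvd_f; rewrite (dvdp_trans q_dvd_p p_dvd_f).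
have [A_small B_small] : (size A <= 2)%N /\ (size B <= 1)%N.
  by apply: (size_qnorm_quadratic (u := (B, A))); rewrite /qnorm /= -pE.
have fE : f = p * (f %/ p) by rewrite mulrC divpK.
apply: (@PsdFactorQnorm f p A B _ fE) => //.
- by apply: (psd_mulKl p_pd); rewrite -fE.
- by apply: (irredp_coprime_size p_irr A_neq0); rewrite p_size.
- by apply: (irredp_coprime_size p_irr B_neq0); rewrite p_size (leq_ltn_trans B_small).
- apply: irredp_coprime => //; apply: contra q_ndvd_f => p_dvd_q.
  have : p %= q by rewrite -dvdp_size_eqp // p_size q_size.
  by rewrite /eqp p_dvd_q /= => /dvdp_trans; apply.
Qed.

Lemma psd_qnorm f : psd_poly f -> exists u, f = qnorm u.
Proof.
move: {2}(size f) (leqnn (size f)) => n; elim: n f => [|n IH] f f_small f_psd.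
  exists (0, 0); move: f_small; rewrite leqn0 size_poly_eq0 => /eqP->.
  by apply/esym/eqP; rewrite qnorm_eq0.
have [f_const|f_nconst] := leqP (size f) 1.
  have fC := size1_polyC f_const.
  have c_ge0 : 0 <= f`_0 by have := f_psd 0; rewrite {1}fC hornerC.
  exists (0, (Num.sqrt f`_0)%:P).
  by rewrite /qnorm /= -polyC_exp sqr_sqrtr // expr2 mul0r mulr0 addr0.
have IHmul p g : size p = 3%N -> f = p * g -> psd_poly g -> exists v, g = qnorm v.
  move=> p_size fE; apply: IH; rewrite -ltnS (leq_trans _ f_small) // fE.
  by rewrite size_mul_quadratic // -fE -size_poly_gt0 ltnW.
case: (psd_factorP f_psd f_nconst) =>
  [r g fE g_psd|g fE g_psd|p A B g fE g_psd _ p_size _ pE _ _ _].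
- have [v gE] := IHmul _ _ (size_exp_XsubC 2 r) fE g_psd.
  by exists (('X - r%:P) * v.1, ('X - r%:P) * v.2); rewrite fE gE /qnorm /=; ring.
- have [v gE] := IHmul _ _ q_size fE g_psd.
  by exists (v.2, q * v.1); rewrite fE gE /qnorm /=; ring.
- have [v gE] := IHmul _ _ p_size fE g_psd.
  by exists (qmul A B v); rewrite qnormM -gE -pE fE mulrC.
Qed.

Definition qnorm_reps f s := uniq s /\ (forall u, u \in s <-> f = qnorm u).

Definition qmul_conj A B s := [seq qmul A B w | w <- s] ++ [seq qmul A (- B) w | w <- s].

Section QnormPrime.
Variable p : {poly R}.
Hypotheses (p_irr : irreducible_poly p) (p_cop_q : coprimep p q).

Let p_neq0 : p != 0. Proof. exact: irredp_neq0. Qed.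

Lemma qnorm_dvdp_qmul A B g x : p = A ^+ 2 + q * B ^+ 2 -> qnorm x = p * g ->
  p %| x.2 * A + q * x.1 * B -> exists2 w, g = qnorm w & x = qmul A B w.
Proof.
case: x => x1 x2 /= pE xE /dvdpP [w2 w2E].
have normE : (x2 * A + q * x1 * B) ^+ 2 + q * (x1 * A - x2 * B) ^+ 2 = p * g * p.
  by rewrite -xE pE /qnorm /=; ring.
have /dvdpP [w1 w1E] : p %| x1 * A - x2 * B.
  apply: (irredp_dvdp_sqr p_irr); rewrite -(Gauss_dvdpr _ p_cop_q).
  have -> : q * (x1 * A - x2 * B) ^+ 2 = p * g * p - (x2 * A + q * x1 * B) ^+ 2.
    by rewrite -normE; ring.
  by rewrite w2E (_ : _ - _ = (p * (g - w2 ^+ 2)) * p) ?dvdp_mull //; ring.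
exists (w1, w2).
  apply: (mulfI (expf_neq0 2 p_neq0)); transitivity (p * g * p); first ring.
  by rewrite -normE w1E w2E /qnorm /=; ring.
congr (_, _); apply: (mulfI p_neq0).
  rewrite [RHS](_ : _ = (w1 * p) * A + (w2 * p) * B); last by rewrite /=; ring.
  by rewrite -w1E -w2E pE; ring.
rewrite [RHS](_ : _ = (w2 * p) * A - q * (w1 * p) * B); last by rewrite /=; ring.
by rewrite -w1E -w2E pE; ring.
Qed.

Lemma qnorm_dvdp_conj A B g x : p = A ^+ 2 + q * B ^+ 2 -> qnorm x = p * g ->
  (p %| x.2 * A + q * x.1 * B) || (p %| x.2 * A + q * x.1 * (- B)).
Proof.
move=> pE xE; apply: (irredp_dvdp_mul p_irr).
have -> : (x.2 * A + q * x.1 * B) * (x.2 * A + q * x.1 * - B) =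
    p * (x.2 ^+ 2 - q * B ^+ 2 * g).
  transitivity (p * x.2 ^+ 2 - q * B ^+ 2 * (p * g)); last ring.
  by rewrite -xE pE /qnorm; ring.
exact: dvdp_mulIl.
Qed.

(* Both conjugate products reach [x] only if [p] divides both coordinates of [x]. *)
Lemma qmul_conj_overlap A B g x w1 w2 : coprimep p A -> coprimep p B ->
  p = A ^+ 2 + q * B ^+ 2 -> qnorm x = p * g ->
  x = qmul A B w1 -> x = qmul A (- B) w2 -> p %| g.
Proof.
case: x => x1 x2 p_cop_A p_cop_B pE xE.
case: w1 => u1 u2; case: w2 => v1 v2; rewrite /qmul /= => -[e1 e2] [e3 e4].
have sumE : x2 * A + q * x1 * B = u2 * p by rewrite pE e1 e2; ring.
have diffE : x2 * A - q * x1 * B = v2 * p by rewrite pE e3 e4; ring.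
have two_neq0 : (2%:R : R) != 0 by rewrite pnatr_eq0.
have /dvdpP [k2 k2E] : p %| x2.
  rewrite -(Gauss_dvdpl _ p_cop_A) -(dvdpZr _ _ two_neq0) scaler_nat mulr2n.
  have -> : x2 * A + x2 * A = (u2 + v2) * p by rewrite mulrDl -sumE -diffE; ring.
  exact: dvdp_mull.
have /dvdpP [k1 k1E] : p %| x1.
  rewrite -(Gauss_dvdpr _ p_cop_q) -(Gauss_dvdpl _ p_cop_B) -(dvdpZr _ _ two_neq0).
  rewrite scaler_nat mulr2n.
  have -> : q * x1 * B + q * x1 * B = (u2 - v2) * p by rewrite mulrBl -sumE -diffE; ring.
  exact: dvdp_mull.
apply/dvdpP; exists (qnorm (k1, k2)); apply: (mulfI p_neq0).
by rewrite -xE k1E k2E /qnorm /=; ring.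
Qed.

Lemma qnorm_reps_qmul_conj A B g s : pd_poly p -> p = A ^+ 2 + q * B ^+ 2 ->
  coprimep p A -> coprimep p B -> psd_poly g -> qnorm_reps g s ->
  qnorm_reps (p * g) (undup (qmul_conj A B s)) /\ (uniq (qmul_conj A B s) <-> ~~ (p %| g)).
Proof.
move=> p_pd pE p_cop_A p_cop_B g_psd [s_uniq sE].
have pNE : p = A ^+ 2 + q * (- B) ^+ 2 by rewrite sqrrN.
have inj_qmul : injective (qmul A B) by apply: qmul_inj; rewrite -pE.
have inj_qmulN : injective (qmul A (- B)) by apply: qmul_inj; rewrite -pNE.
have memE x : x \in qmul_conj A B s <-> p * g = qnorm x.
  rewrite mem_cat; split.
    by case/orP => /mapP [w /sE gE ->]; rewrite qnormM gE mulrC -?pE -?pNE.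
  move=> xE; have := qnorm_dvdp_conj pE (esym xE).
  case/orP => [/(qnorm_dvdp_qmul pE (esym xE))|/(qnorm_dvdp_qmul pNE (esym xE))] [w /sE w_s ->].
    by rewrite map_f.
  by rewrite orbC map_f.
split; first by split=> [|x]; rewrite ?undup_uniq ?mem_undup.
rewrite cat_uniq !map_inj_uniq // s_uniq /= andbT; split.
  apply: contra => /dvdpP [h gE].
  have [v hE] : exists v, h = qnorm v.
    by apply: psd_qnorm; apply: (psd_mulKl p_pd); rewrite mulrC -gE.
  pose x := (p * v.1, p * v.2).
  have xE : qnorm x = p * g by rewrite gE hE /qnorm /=; ring.
  have [w1 /sE w1_s x_w1] : exists2 w, g = qnorm w & x = qmul A B w.
    apply: (qnorm_dvdp_qmul pE xE).
    by rewrite (_ : _ + _ = p * (v.2 * A + q * v.1 * B)) ?dvdp_mulIl //=; ring.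
  have [w2 /sE w2_s x_w2] : exists2 w, g = qnorm w & x = qmul A (- B) w.
    apply: (qnorm_dvdp_qmul pNE xE).
    by rewrite (_ : _ + _ = p * (v.2 * A + q * v.1 * - B)) ?dvdp_mulIl //=; ring.
  by apply/hasP; exists x; rewrite ?x_w1 ?map_f // -x_w1 x_w2 map_f.
apply: contra => /hasP [x /mapP [w2 _ x_w2] /mapP [w1 w1_s x_w1]].
apply: (qmul_conj_overlap p_cop_A p_cop_B pE _ x_w1 x_w2).
by rewrite x_w1 qnormM -pE mulrC -(sE _).1.
Qed.

End QnormPrime.

Lemma qnorm_reps_const c : 0 < c ->
  qnorm_reps c%:P [:: (0, (Num.sqrt c)%:P); (0, - (Num.sqrt c)%:P)].
Proof.
move=> c_gt0; set s := Num.sqrt c; have s_gt0 : 0 < s by rewrite sqrtr_gt0.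
have sE : c%:P = s%:P ^+ 2 by rewrite -polyC_exp sqr_sqrtr // ltW.
split.
  rewrite /= inE andbT xpair_eqE eqxx /= -polyCN (inj_eq polyC_inj).
  by rewrite -subr_eq0 opprK -mulr2n mulrn_eq0 /= gt_eqF.
case=> u1 u2; split.
  by rewrite !inE !xpair_eqE => /orP[] /andP[/eqP-> /eqP->];
    rewrite /qnorm /= ?sqrrN sE expr0n /= mulr0 addr0.
move=> cE; have u1_0 : u1 = 0.
  apply/eqP; apply: contraTT isT => u1_neq0.
  have [_] := size_qnorm (u1, u2); rewrite -cE size_polyC gt_eqF //=.
  by rewrite size_mul ?q_size ?expf_neq0.
move: cE; rewrite /qnorm /= u1_0 expr0n /= mulr0 addr0 sE => /eqP.
rewrite eq_sym -subr_eq0 subr_sqr mulf_eq0 subr_eq0 addr_eq0.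
by case/orP => /eqP->; rewrite !inE ?eqxx ?orbT.
Qed.

Lemma qnorm_reps_XsubC_sqr r g s : qnorm_reps g s ->
  qnorm_reps (('X - r%:P) ^+ 2 * g) [seq (('X - r%:P) * v.1, ('X - r%:P) * v.2) | v <- s].
Proof.
case=> s_uniq sE; set c := 'X - r%:P; have c_neq0 : c != 0 by rewrite polyXsubC_eq0.
split.
  rewrite map_inj_uniq // => -[a1 a2] [b1 b2] /= [e1 e2].
  by rewrite (mulfI c_neq0 e1) (mulfI c_neq0 e2).
case=> u1 u2; split.
  by case/mapP => -[v1 v2] /sE gE [-> ->]; rewrite gE /qnorm /=; ring.
move=> fE; have [/= u1_r u2_r] : root u1 r /\ root u2 r.
  apply: (qnorm_root (u := (u1, u2))).
  by rewrite -fE /root hornerM horner_exp hornerXsubC subrr expr2 !mul0r.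
have [w1 w1E] := factor_theorem _ _ u1_r; have [w2 w2E] := factor_theorem _ _ u2_r.
apply/mapP; exists (w1, w2); last by rewrite /= w1E w2E !(mulrC c).
apply/sE; apply: (mulfI (expf_neq0 2 c_neq0)).
by rewrite fE w1E w2E /qnorm /c /=; ring.
Qed.

Lemma qnorm_reps_mulq g s : qnorm_reps g s -> qnorm_reps (q * g) [seq (v.2, q * v.1) | v <- s].
Proof.
case=> s_uniq sE; split.
  rewrite map_inj_uniq // => -[a1 a2] [b1 b2] /= [e1 e2].
  by rewrite e1 (mulfI q_neq0 e2).
case=> u1 u2; split.
  by case/mapP => -[v1 v2] /sE gE [-> ->]; rewrite gE /qnorm /=; ring.
move=> fE; have /(irredp_dvdp_sqr q_irr) /dvdpP [w u2E] : q %| u2 ^+ 2.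
  by rewrite (_ : u2 ^+ 2 = q * (g - u1 ^+ 2)) ?dvdp_mulIl // mulrBr fE /qnorm /=; ring.
apply/mapP; exists (w, u1); last by rewrite /= u2E mulrC.
by apply/sE; apply: (mulfI q_neq0); rewrite fE u2E /qnorm /=; ring.
Qed.

Definition qnorm_count f N := exists s, [/\ qnorm_reps f s, (size s <= N)%N &
  size s = N <-> ~ (q %| f) /\ squarefree_poly f].

Lemma qnorm_count_const c : 0 < c -> qnorm_count c%:P 2.
Proof.
move=> c_gt0; have c_neq0 : c%:P != 0 by rewrite polyC_eq0 gt_eqF.
have small_dvd g : g %| c%:P -> (size g <= 1)%N.
  by move=> /(dvdp_leq c_neq0); rewrite size_polyC gt_eqF.
eexists; split; [exact: qnorm_reps_const | by [] |].
split=> // _; split; first by move=> /small_dvd; rewrite q_size.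
move=> g g_nconst g2_dvd_c.
by have := small_dvd g (dvdp_trans (dvdp_mulIl g g) g2_dvd_c); rewrite leqNgt g_nconst.
Qed.

Lemma qnorm_count_XsubC_sqr r g N : (0 < N)%N -> qnorm_count g N ->
  qnorm_count (('X - r%:P) ^+ 2 * g) (N + N).
Proof.
move=> N_gt0 [s [s_reps s_small _]]; have s_size : (size s <= N)%N := s_small.
eexists; split; first exact: qnorm_reps_XsubC_sqr s_reps.
  by rewrite size_map (leq_trans s_small) ?leq_addr.
split=> [|[_]]; first by rewrite size_map => s_max; move: s_size; rewrite s_max; lia.
have XsubC_nconst : (1 < size ('X - r%:P)%R)%N by rewrite size_XsubC.
by move/(not_squarefree_sqr_mul XsubC_nconst).
Qed.

Lemma qnorm_count_mulq g N : (0 < N)%N -> qnorm_count g N -> qnorm_count (q * g) (N + N).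
Proof.
move=> N_gt0 [s [s_reps s_small _]]; have s_size : (size s <= N)%N := s_small.
eexists; split; first exact: qnorm_reps_mulq s_reps.
  by rewrite size_map (leq_trans s_small) ?leq_addr.
split=> [|[]]; first by rewrite size_map => s_max; move: s_size; rewrite s_max; lia.
by rewrite dvdp_mulIl.
Qed.

Lemma qnorm_count_qprime p A B g N : pd_poly p -> size p = 3%N -> p = A ^+ 2 + q * B ^+ 2 ->
  coprimep p A -> coprimep p B -> coprimep p q -> ~~ (q %| p * g) -> psd_poly g ->
  qnorm_count g N -> qnorm_count (p * g) (N + N).
Proof.
move=> p_pd p_size pE p_cop_A p_cop_B p_cop_q q_ndvd_f g_psd [s [s_reps s_small s_max]].
have p_irr := pd_quadratic_irreducible p_pd p_size.
have [f_reps L_uniqE] := qnorm_reps_qmul_conj p_irr p_cop_q p_pd pE p_cop_A p_cop_B g_psd s_reps.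
set L := qmul_conj A B s in f_reps L_uniqE.
have L_size : size L = (size s + size s)%N by rewrite size_cat !size_map.
have s_size : (size s <= N)%N := s_small.
have q_ndvd_g : ~ (q %| g) by move=> q_dvd_g; move: q_ndvd_f; rewrite dvdp_mull.
have f_sqfE := squarefree_mul_irr g p_irr.
exists (undup L); split=> //; first by rewrite (leq_trans (size_undup L)) // L_size; lia.
split=> [L_max|[_ /f_sqfE [g_sqf p_ndvd_g]]].
  have [s_N L_uniq] : size s = N /\ uniq L.
    move: s_size (size_undup L) (ltn_size_undup L); rewrite L_size L_max.
    by case: (uniq L) => /= ? ? ?; split=> //; lia.
  split; first exact/negP.
  by apply/f_sqfE; split; [case: (s_max.1 s_N) | exact: L_uniqE.1].
by rewrite undup_id ?L_size ?(s_max.2 (conj q_ndvd_g g_sqf)) //; apply: L_uniqE.2.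
Qed.

Lemma qnorm_count_psd d f : psd_poly f -> f != 0 -> size f = (2 * d).+1 ->
  qnorm_count f (2 ^ d.+1).
Proof.
elim: d f => [|d IH] f f_psd f_neq0 f_size.
  have fC : f = (f`_0)%:P by apply: size1_polyC; rewrite f_size.
  rewrite fC; apply: qnorm_count_const; rewrite lt_def -polyC_eq0 -fC f_neq0 /=.
  by have := f_psd 0; rewrite {1}fC hornerC.
have IHmul p g : size p = 3%N -> f = p * g -> psd_poly g -> qnorm_count g (2 ^ d.+1).
  move=> p_size fE g_psd; apply: IH => //.
    by apply: contraNneq f_neq0 => g0; rewrite fE g0 mulr0.
  by move: f_size; rewrite fE size_mul_quadratic -?fE // mulnS => -[].
have pow_gt0 : (0 < 2 ^ d.+1)%N by rewrite expn_gt0.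
rewrite expnS mul2n -addnn.
have f_nconst : (1 < size f)%N by rewrite f_size.
case: (psd_factorP f_psd f_nconst) =>
  [r g fE g_psd|g fE g_psd|p A B g fE g_psd q_ndvd_f p_size p_pd pE p_cop_A p_cop_B p_cop_q].
- by rewrite fE; apply/qnorm_count_XsubC_sqr/(IHmul _ _ (size_exp_XsubC 2 r) fE g_psd).
- by rewrite fE; apply/qnorm_count_mulq/(IHmul _ _ q_size fE g_psd).
- rewrite fE in q_ndvd_f *.
  by apply: (qnorm_count_qprime p_pd p_size pE) => //; apply: IHmul p_size fE g_psd.
Qed.

End QNorm.

Theorem proposition1p1 (R : realType) (q : {poly R}) :
  pd_poly q -> size q = 3%N ->
  (forall f : {poly R}, psd_poly f ->
     exists xi eta : {poly R}, f = eta ^+ 2 + q * xi ^+ 2)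
  /\
  (forall (f : {poly R}) (d : nat), psd_poly f -> f != 0 ->
     size f = (2 * d).+1 ->
     exists s : seq ({poly R} * {poly R}),
       uniq s /\
       (forall xi eta : {poly R},
          (xi, eta) \in s <-> f = eta ^+ 2 + q * xi ^+ 2) /\
       (size s <= expn 2 d.+1)%N /\
       (size s = expn 2 d.+1 <-> (~ (q %| f) /\ squarefree_poly f))).
Proof.
move=> q_pd q_size; split.
  by move=> f /(psd_qnorm q_pd q_size) [[xi eta] fE]; exists xi, eta.
move=> f d f_psd f_neq0 f_size.
have [s [[s_uniq sE] s_small s_max]] := qnorm_count_psd q_pd q_size f_psd f_neq0 f_size.
by exists s; split=> //; split=> // xi eta; apply: sE.
Qed.
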